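(* For all integers $\alpha\ge2$, $0\le m\le\alpha$ and $n\in\mathbb Z$, $$C_{\alpha,m,n}=C_{\alpha-1,m,n}+y_{2\alpha-1,n}\,C_{\alpha-1,m-1,n}+y_{2\alpha-2,n}\,C_{\alpha-2,m-1,n}.$$ Moreover $C_{\alpha,0,n}=1$ for all $\alpha\ge0$.
   Context: Let $(r_{1,n})_{n\in\mathbb Z}$ be a sequence in a field $K$, set $r_{0,n}=1$ and $r_{\alpha,n}=\det_{1\le i,j\le\alpha}(r_{1,n+i+j-1-\alpha})$ for $\alpha\ge1$, and assume all $r_{\alpha,n}$ are nonzero. For $p\ge0$ let $s_p(j)=j$ if $j\le p$ and $s_p(j)=j+1$ if $j>p$; for $\alpha\ge1$, $0\le m\le \alpha$ let $c_{\alpha,m,n}=\det_{1\le i,j\le\alpha}(r_{1,n+i+s_{\alpha-m}(j)-\alpha-1})$, $c_{0,0,n}=1$, and $c_{\alpha,m,n}=0$ if $m<0$ or $m>\alpha$. Define $v_{\alpha,n}=r_{\alpha,n}/r_{\alpha-1,n}$ ($\alpha\ge1$), the weights $$y_{2\alpha-1,n}=\frac{v_{\alpha,n+1}}{v_{\alpha,n}}=\frac{r_{\alpha-1,n}r_{\alpha,n+1}}{r_{\alpha,n}r_{\alpha-1,n+1}},\qquad y_{2\alpha,n}=\frac{v_{\alpha+1,n+1}}{v_{\alpha,n}}=\frac{r_{\alpha-1,n}r_{\alpha+1,n+1}}{r_{\alpha,n}r_{\alpha,n+1}}\quad(\alpha\ge1),$$ and $C_{\alpha,m,n}=c_{\alpha,m,n}/(v_{1,n}v_{2,n}\cdots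 v_{\alpha,n})$ (with $C_{0,0,n}=1$ and $C_{\alpha,m,n}=0$ if $m<0$ or $m>\alpha$). *)

From HB Require Import structures.
From mathcomp Require Import all_boot all_order all_algebra.
Set Implicit Arguments. Unset Strict Implicit. Unset Printing Implicit Defensive.
Import Order.TTheory GRing.Theory Num.Theory.
Local Open Scope ring_scope.

Section Defs.
Variable K : fieldType.
Variable r1 : int -> K.

(* r_{a,n} = det_{1<=i,j<=a} r1(n+i+j-1-a); with 0-based i',j' : n+i'+j'+1-a.
   For a = 0 this is the empty determinant, i.e. 1. *)
Definition rdet (a : nat) (n : int) : K :=
  \det (\matrix_(i < a, j < a) r1 (n + (i : nat)%:Z + (j : nat)%:Z + 1 - a%:Z)).

Definition sp (p j : nat) : nat := if (j <= p)%N then j else j.+1.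

(* c_{a,m,n} = det_{1<=i,j<=a} r1(n+i+s_{a-m}(j)-a-1), zero if m<0 or m>a.
   0-based: i = i'+1, j = j'+1, giving n + i' + s_{a-m}(j'+1) - a. *)
Definition cdet (a : nat) (m : int) (n : int) : K :=
  if (0 <= m) && (m <= a%:Z) then
    \det (\matrix_(i < a, j < a)
            r1 (n + (i : nat)%:Z + (sp (a - `|m|%N) (j : nat).+1)%:Z - a%:Z))
  else 0.

Definition vv (a : nat) (n : int) : K := rdet a n / rdet a.-1 n.

(* y_{2a-1,n} = v_{a,n+1}/v_{a,n},  y_{2a,n} = v_{a+1,n+1}/v_{a,n}  (a >= 1) *)
Definition yy (k : nat) (n : int) : K :=
  if odd k then vv k.+1./2 (n + 1) / vv k.+1./2 n
  else vv k./2.+1 (n + 1) / vv k./2 n.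

Definition CC (a : nat) (m : int) (n : int) : K :=
  cdet a m n / \prod_(1 <= i < a.+1) vv i n.

End Defs.

(* For a = s + 2 and 0 <= m <= a, clearing denominators turns the recurrence
   into the polynomial identity [key_identity].  For 0 < m < a it is the
   combination r_(a-1,n) * (I) + r_(a,n) * (II) of
     (I)  r_(a,n) c_(a-1,m,n+1) = r_(a-1,n+1) c_(a,m,n) - r_(a,n+1) c_(a-1,m-1,n),
     (II) r_(a,n+1) c_(a-2,m-1,n) = c_(a-1,m,n+1) r_(a-1,n) - c_(a-1,m,n) r_(a-1,n+1),
   a three-term Pluecker relation and a Desnanot-Jacobi identity for the
   Hankel array (i, j) |-> r1 (b + i + j); for m = 0 and m = a it follows from
   the boundary values c_(a,0,n) = r_(a,n) and c_(a,a,n) = r_(a,n+1). *)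

From HB Require Import structures.
From mathcomp Require Import all_boot all_order all_algebra.
From mathcomp Require Import fingroup perm zify ring.
Set Implicit Arguments. Unset Strict Implicit. Unset Printing Implicit Defensive.
Import Order.TTheory GRing.Theory Num.Theory.
Local Open Scope ring_scope.

Section RowReplacement.
Variable K : fieldType.

Definition replace_row n (M : 'M[K]_n) (r : 'I_n) (v : 'rV[K]_n) : 'M[K]_n :=
  \matrix_(i, j) if i == r then v 0 j else M i j.

Lemma det_replace_row n (M : 'M[K]_n) r v :
  \det (replace_row M r v) = \sum_j v 0 j * cofactor M r j.
Proof.
rewrite (expand_det_row _ r); apply: eq_bigr => j _.
rewrite mxE eqxx; congr (_ * (_ * \det _)).
apply/matrixP => i l; rewrite !mxE.
by rewrite eq_sym (negbTE (neq_lift r i)).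
Qed.

Lemma det_mx22 (P : 'M[K]_2) : \det P = P 0 0 * P 1 1 - P 0 1 * P 1 0.
Proof.
rewrite (expand_det_row _ 0) big_ord_recl big_ord1 /cofactor !det_mx11 !mxE /=.
have -> : lift 0 (0 : 'I_1) = 1 :> 'I_2 by apply: val_inj.
have -> : lift 1 (0 : 'I_1) = 0 :> 'I_2 by apply: val_inj.
by rewrite expr0 expr1 mul1r mulN1r mulrN.
Qed.

(* Multiplying M[r0 <- z, r1 <- w] by adj M gives a block-triangular matrix
   whose 2 x 2 corner has the single replacements as entries. *)
Lemma sylvester_first_rows n (M : 'M[K]_(2 + n)) (z w : 'rV[K]_(2 + n)) :
  \det M != 0 ->
  let r0 := lshift n (0 : 'I_2) in let r1 := lshift n (1 : 'I_2) in
  \det M * \det (replace_row (replace_row M r0 z) r1 w)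
  = \det (replace_row M r0 z) * \det (replace_row M r1 w)
    - \det (replace_row M r1 z) * \det (replace_row M r0 w).
Proof.
move=> detM r0 r1; set d := \det M.
pose Z : 'M[K]_(2, 2 + n) := \matrix_(i, k) if i == 0 then z 0 k else w 0 k.
have -> : replace_row (replace_row M r0 z) r1 w = col_mx Z (dsubmx M).
  apply/matrixP => i k; case: (splitP i) => [i' ei | i' ei].
    have -> : i = lshift n i' by apply: val_inj.
    rewrite col_mxEu !mxE /r0 /r1 !(inj_eq (@lshift_inj _ _)).
    by case: i' {ei} => [[|[|?]] ?].
  have -> : i = rshift 2 i' by apply: val_inj.
  by rewrite col_mxEd !mxE /r0 /r1 !eq_rlshift.
pose X := Z *m \adj M.
(* the rows of M other than r0 and r1 are sent to d times unit rows *)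
have blockX : col_mx Z (dsubmx M) *m \adj M = block_mx (lsubmx X) (rsubmx X) 0 d%:M.
  rewrite mul_col_mx; have -> : dsubmx M *m \adj M = row_mx 0 d%:M.
    have := congr1 dsubmx (mul_mx_adj M).
    rewrite -{1}(vsubmxK M) mul_col_mx col_mxKd => ->.
    by rewrite (scalar_mx_block 2 n) block_mxEv col_mxKd.
  by rewrite block_mxEv hsubmxK.
have cornerX : \det (lsubmx X) = \det (replace_row M r0 z) * \det (replace_row M r1 w)
                               - \det (replace_row M r1 z) * \det (replace_row M r0 w).
  rewrite det_mx22 !mxE !det_replace_row.
  have Zadj_entry i j : \sum_k Z i k * (\adj M) k (lshift n j)
             = \sum_k (if i == 0 then z 0 k else w 0 k) * cofactor M (lshift n j) k.
    by apply: eq_bigr => k _; rewrite !mxE.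
  by rewrite !Zadj_entry.
have detadj : d * \det (\adj M) = d ^+ (2 + n).
  by rewrite -det_mulmx mul_mx_adj det_scalar.
have := congr1 determinant blockX.
rewrite det_mulmx det_ublock det_scalar cornerX => Eblock.
apply: (mulIf (expf_neq0 n.+1 detM)).
by rewrite -/d [d * _]mulrC -mulrA -exprS -[d ^+ n.+2]detadj mulrCA Eblock mulrCA -exprS.
Qed.

Lemma replace_row_perm n (p : 'S_n) (M : 'M[K]_n) r v :
  replace_row (row_perm p M) r v = row_perm p (replace_row M (p r) v).
Proof. by apply/matrixP => i j; rewrite !mxE (inj_eq perm_inj). Qed.

(* Sylvester's identity for the first row and any other row J, obtained by
   moving J to the second position with a transposition. *)
Lemma sylvester_rows n (M : 'M[K]_(2 + n)) (J : 'I_(2 + n)) (z w : 'rV[K]_(2 + n)) :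
  let r0 := lshift n (0 : 'I_2) in
  J != r0 -> \det M != 0 ->
  \det M * \det (replace_row (replace_row M r0 z) J w)
  = \det (replace_row M r0 z) * \det (replace_row M J w)
    - \det (replace_row M J z) * \det (replace_row M r0 w).
Proof.
move=> r0 J_r0 detM; pose r1 := lshift n (1 : 'I_2).
pose p : 'S_(2 + n) := tperm r1 J.
have p_r0 : p r0 = r0 by rewrite tpermD // eq_sym (inj_eq (@lshift_inj _ _)).
have p_r1 : p r1 = J by rewrite tpermL.
have det_perm_row (A : 'M[K]_(2 + n)) : \det (row_perm p A) = (-1) ^+ p * \det A.
  by rewrite row_permE det_mulmx det_perm.
have detpM : \det (row_perm p M) != 0 by rewrite det_perm_row mulf_neq0 ?signr_eq0.
have := sylvester_first_rows z w detpM.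
rewrite /= -/r0 -/r1 !replace_row_perm p_r0 p_r1 !det_perm_row.
have signK x y : (-1) ^+ p * x * ((-1) ^+ p * y) = x * y :> K.
  by rewrite mulrACA -expr2 sqrr_sign mul1r.
by rewrite !signK.
Qed.
End RowReplacement.

Ltac index_arith :=
  repeat match goal with
  | |- context [leq ?x ?y] => let h := fresh "h" in case: (leqP x y) => h
  | |- context [?x == ?y] => let h := fresh "h" in case: (x =P y) => h
  end; rewrite /=; first [by [] | by exfalso; lia | by f_equal; lia].

Section Arrays.
Variable K : fieldType.
Implicit Types (F G : nat -> nat -> K) (v z w : nat -> K).

(* Minors of structured matrices are most easily described by reindexing an
   array indexed by nat x nat; [smx s F] is its leading s x s section. *)
Definition smx s F : 'M[K]_s := \matrix_(i, j) F i j.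
Definition sdet s F : K := \det (smx s F).

Definition setrow F r v : nat -> nat -> K := fun i j => if i == r then v j else F i j.
Definition unitv q : nat -> K := fun j => (j == q)%:R.

Lemma eq_sdet s F G :
  (forall i j, (i < s)%N -> (j < s)%N -> F i j = G i j) -> sdet s F = sdet s G.
Proof. by move=> FG; congr (\det _); apply/matrixP => i j; rewrite !mxE FG. Qed.

Lemma smx_setrow s F (r : 'I_s) v :
  smx s (setrow F r v) = replace_row (smx s F) r (\row_j v j).
Proof. by apply/matrixP => i j; rewrite !mxE. Qed.

Lemma sylvester_sdet s F J z w : (0 < J < s.+2)%N -> sdet s.+2 F != 0 ->
  sdet s.+2 F * sdet s.+2 (setrow (setrow F 0 z) J w)
  = sdet s.+2 (setrow F 0 z) * sdet s.+2 (setrow F J w)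
    - sdet s.+2 (setrow F J z) * sdet s.+2 (setrow F 0 w).
Proof.
case/andP=> J_gt0 J_lt detF.
pose r0 := lshift s (0 : 'I_2); pose J' : 'I_(2 + s) := Ordinal J_lt.
have J'_r0 : J' != r0 by rewrite -val_eqE /= -lt0n.
have := sylvester_rows (\row_j z j) (\row_j w j) J'_r0 detF.
by rewrite /sdet -!smx_setrow.
Qed.

Lemma sdet_setrow_unit s F r q : (r < s.+1)%N -> (q < s.+1)%N ->
  sdet s.+1 (setrow F r (unitv q))
  = (-1) ^+ (r + q) * sdet s (fun i j => F (bump r i) (bump q j)).
Proof.
move=> r_lt q_lt; rewrite /sdet (expand_det_row _ (Ordinal r_lt)).
rewrite (bigD1 (Ordinal q_lt)) //= big1 => [|j]; last first.
  by rewrite -val_eqE !mxE /setrow /unitv /= eqxx => /negbTE->; rewrite mul0r.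
rewrite !mxE /setrow /unitv /= !eqxx mul1r addr0 /cofactor; congr (_ * \det _).
by apply/matrixP => i j; rewrite !mxE /= eq_sym (negbTE (neq_bump r i)).
Qed.

(* The Desnanot-Jacobi identity: deleting the first and last rows together
   with two columns c < d.  Here [bump d (bump c j)] enumerates the columns
   different from c and d. *)
Lemma desnanot_jacobi s F c d : (c < d < s.+2)%N -> sdet s.+2 F != 0 ->
  sdet s.+2 F * sdet s (fun i j => F i.+1 (bump d (bump c j)))
  = sdet s.+1 (fun i j => F i.+1 (bump c j)) * sdet s.+1 (fun i j => F i (bump d j))
    - sdet s.+1 (fun i j => F i (bump c j)) * sdet s.+1 (fun i j => F i.+1 (bump d j)).
Proof.
case/andP=> c_lt_d d_lt detF.
have c_lt : (c < s.+2)%N by apply: ltn_trans d_lt.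
have J_ok : (0 < s.+1 < s.+2)%N by rewrite ltnSn.
have double_replacement : sdet s.+2 (setrow (setrow F 0 (unitv c)) s.+1 (unitv d))
   = (-1) ^+ (s.+1 + d) * ((-1) ^+ (0 + c) * sdet s (fun i j => F i.+1 (bump d (bump c j)))).
  rewrite sdet_setrow_unit //; congr (_ * _).
  rewrite -(@sdet_setrow_unit s (fun i j => F i (bump d j)) 0 c (ltn0Sn s) (leq_trans c_lt_d d_lt)).
  apply: eq_sdet => i j i_lt j_lt; rewrite /setrow /unitv /bump /=.
  index_arith.
have last_row G : sdet s.+1 (fun i j => G (bump s.+1 i) j) = sdet s.+1 G.
  by apply: eq_sdet => i j i_lt _; rewrite /bump leqNgt i_lt.
have sign_swap : (-1) ^+ (s.+1 + c) * (-1) ^+ d = (-1) ^+ c * (-1) ^+ (s.+1 + d) :> K.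
  by rewrite -!exprD addnAC addnC.
have := sylvester_sdet (unitv c) (unitv d) J_ok detF.
rewrite double_replacement !sdet_setrow_unit // !add0n.
rewrite (last_row (fun i j => F i (bump d j))) (last_row (fun i j => F i (bump c j))).
rewrite [(-1) ^+ c * _ * _]mulrACA [(-1) ^+ (s.+1 + c) * _ * _]mulrACA sign_swap -mulrBr.
have sign_nz : (-1) ^+ c * (-1) ^+ (s.+1 + d) != 0 :> K by rewrite mulf_neq0 ?signr_eq0.
by move=> E; apply: (mulfI sign_nz); apply: (etrans _ E); ring.
Qed.

Lemma sdet_border s F : sdet s.+1 (setrow F s (unitv s)) = sdet s F.
Proof.
rewrite sdet_setrow_unit // -signr_odd addnn odd_double mul1r.
by apply: eq_sdet => i j i_lt j_lt; rewrite /bump; index_arith.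
Qed.

(* It is the Desnanot-Jacobi identity for
   the square array bordered by the unit row e_(s+2). *)
Lemma plucker_three_term s F d : (0 < d < s.+2)%N -> sdet s.+2 F != 0 ->
  sdet s.+2 F * sdet s.+1 (fun i j => F i.+1 (bump d j.+1))
  = sdet s.+1 (fun i j => F i.+1 j.+1) * sdet s.+2 (fun i j => F i (bump d j))
    - sdet s.+2 (fun i j => F i j.+1) * sdet s.+1 (fun i j => F i.+1 (bump d j)).
Proof.
case/andP=> d_gt0 d_lt detF; pose B := setrow F s.+2 (unitv s.+2).
have dj_ok : (0 < d < s.+3)%N by rewrite d_gt0 ltnS ltnW.
have := @desnanot_jacobi s.+1 B 0 d dj_ok.
have -> : sdet s.+2 (fun i j => B i.+1 (bump 0 j))
          = sdet s.+2 (setrow (fun i j => F i.+1 j.+1) s.+1 (unitv s.+1)).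
  by apply: eq_sdet => i j i_lt j_lt; rewrite /B /setrow /unitv /bump; index_arith.
have -> : sdet s.+2 (fun i j => B i.+1 (bump d j))
          = sdet s.+2 (setrow (fun i j => F i.+1 (bump d j)) s.+1 (unitv s.+1)).
  by apply: eq_sdet => i j i_lt j_lt; rewrite /B /setrow /unitv /bump; index_arith.
have -> : sdet s.+1 (fun i j => B i.+1 (bump d (bump 0 j)))
          = sdet s.+1 (fun i j => F i.+1 (bump d j.+1)).
  by apply: eq_sdet => i j i_lt j_lt; rewrite /B /setrow /bump; index_arith.
have low_rows (G : nat -> nat) : sdet s.+2 (fun i j => B i (G j)) = sdet s.+2 (fun i j => F i (G j)).
  by apply: eq_sdet => i j i_lt j_lt; rewrite /B /setrow; index_arith.
by rewrite !sdet_border (low_rows (bump d)) (low_rows (bump 0)) => /(_ detF).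
Qed.
End Arrays.

Section HankelMinors.
Variables (K : fieldType) (r1 : int -> K).

Definition hank (b : int) : nat -> nat -> K := fun i j => r1 (b + (i + j)%:Z).

Lemma rdetE a n : rdet r1 a n = sdet a (fun i j => r1 (n + i%:Z + j%:Z + 1 - a%:Z)).
Proof. by []. Qed.

(* c_(a,m,n) is the section of the same array with column a - m deleted:
   in its column selection, s_x (j + 1) = bump x j + 1. *)
Lemma cdetE a m n : (m <= a)%N ->
  cdet r1 a m n = sdet a (fun i j => r1 (n + i%:Z + (bump (a - m) j).+1%:Z - a%:Z)).
Proof.
rewrite /cdet lez_nat => -> /=.
rewrite -[LHS]/(sdet a (fun i j => r1 (n + i%:Z + (sp (a - m) j.+1)%:Z - a%:Z))).
by apply: eq_sdet => i j _ _; rewrite /sp /bump; index_arith.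
Qed.

Lemma cdet_out a m n : ~~ ((0 <= m) && (m <= a%:Z)) -> cdet r1 a m n = 0.
Proof. by rewrite /cdet => /negbTE->. Qed.

Lemma cdet_empty a n : cdet r1 a 0 n = rdet r1 a n.
Proof.
by rewrite cdetE // rdetE subn0; apply: eq_sdet => i j _ j_lt; rewrite /bump; index_arith.
Qed.

Lemma cdet_full a n : cdet r1 a a n = rdet r1 a (n + 1).
Proof.
by rewrite cdetE // rdetE subnn; apply: eq_sdet => i j _ _; rewrite /bump; index_arith.
Qed.

Ltac hankel_entries :=
  apply: eq_sdet => i j i_lt j_lt; rewrite /hank /bump; index_arith.

Section Relations.
Variables (n : int) (s q : nat).
Hypothesis q_le : (q <= s)%N.

(* The base of the Hankel array containing all the minors below. *)
Let b := n - s%:Z - 1.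

Lemma hankel_plucker : rdet r1 s.+2 n != 0 ->
  rdet r1 s.+2 n * cdet r1 s.+1 q.+1 (n + 1)
  = rdet r1 s.+1 (n + 1) * cdet r1 s.+2 q.+1 n - rdet r1 s.+2 (n + 1) * cdet r1 s.+1 q n.
Proof.
move=> detR; have d_ok : (0 < (s - q).+1 < s.+2)%N by apply/andP; split; lia.
have := @plucker_three_term _ s (hank b) _ d_ok.
have -> : sdet s.+2 (hank b) = rdet r1 s.+2 n by rewrite rdetE; hankel_entries.
move=> /(_ detR) E.
rewrite !rdetE !cdetE ?ltnS ?(leq_trans q_le) //.
apply: etrans (etrans _ E) _; [congr (_ * _) | congr (_ * _ - _ * _)]; hankel_entries.
Qed.

Lemma hankel_desnanot_jacobi : rdet r1 s.+2 (n + 1) != 0 ->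
  rdet r1 s.+2 (n + 1) * cdet r1 s q n
  = cdet r1 s.+1 q.+1 (n + 1) * rdet r1 s.+1 n - cdet r1 s.+1 q.+1 n * rdet r1 s.+1 (n + 1).
Proof.
move=> detRp; have cd_ok : (s - q < s.+1 < s.+2)%N by apply/andP; split; lia.
have := @desnanot_jacobi _ s (fun i j => hank b i j.+1) _ _ cd_ok.
have -> : sdet s.+2 (fun i j => hank b i j.+1) = rdet r1 s.+2 (n + 1).
  by rewrite rdetE; hankel_entries.
move=> /(_ detRp) E.
rewrite !rdetE !cdetE ?ltnS ?(leq_trans q_le) //.
apply: etrans (etrans _ E) _; [congr (_ * _) | congr (_ * _ - _ * _)]; hankel_entries.
Qed.
End Relations.
End HankelMinors.

Lemma yy_odd (K : fieldType) (r1 : int -> K) a n :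
  yy r1 (2 * a.+1).-1 n = vv r1 a.+1 (n + 1) / vv r1 a.+1 n.
Proof. by rewrite /yy mul2n doubleS /= odd_double /= doubleK. Qed.

Lemma yy_even (K : fieldType) (r1 : int -> K) a n :
  yy r1 (2 * a.+2).-2 n = vv r1 a.+2 (n + 1) / vv r1 a.+1 n.
Proof. by rewrite /yy mul2n !doubleS /= odd_double /= doubleK. Qed.

Section NormalizedMinors.
Variables (K : fieldType) (r1 : int -> K).
Hypothesis hr : forall (a : nat) (n : int), (1 <= a)%N -> rdet r1 a n != 0.

Lemma rdet_neq0 a n : rdet r1 a n != 0.
Proof. by case: a => [|a]; [rewrite /rdet det_mx00 oner_neq0 | apply: hr]. Qed.

(* The product v_1 ... v_a telescopes to r_(a,n), so C = c / r. *)
Lemma CCE a m n : CC r1 a m n = cdet r1 a m n / rdet r1 a n.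
Proof.
congr (_ / _); elim: a => [|a IH]; first by rewrite big_geq // /rdet det_mx00.
by rewrite big_nat_recr //= IH /vv mulrC divfK // rdet_neq0.
Qed.

(* The recurrence with denominators cleared, for a = s + 2; it holds for all
   0 <= m <= a, the extreme values of m being read off the boundary minors. *)
Lemma key_identity s (m : int) (n : int) : 0 <= m -> m <= s.+2%:Z ->
  cdet r1 s.+2 m n * rdet r1 s.+1 n * rdet r1 s.+1 (n + 1)
  = cdet r1 s.+1 m n * rdet r1 s.+2 n * rdet r1 s.+1 (n + 1)
    + rdet r1 s.+1 n * rdet r1 s.+2 (n + 1) * cdet r1 s.+1 (m - 1) n
    + rdet r1 s.+2 n * rdet r1 s.+2 (n + 1) * cdet r1 s (m - 1) n.
Proof.
case: m => [m|//] _; rewrite lez_nat; case: m => [|q] q_le.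
  by rewrite !cdet_empty !cdet_out //; ring.
have -> : q.+1%:Z - 1 = q by rewrite -addn1 PoszD addrK.
have [->|q_lt] := eqVneq q s.+1.
  by rewrite !cdet_full !cdet_out ?lez_nat ?ltnn ?andbF //; ring.
have q_le' : (q <= s)%N by rewrite -ltnS ltn_neqAle q_lt.
have E1 := @hankel_plucker _ r1 n s q q_le' (rdet_neq0 _ _).
have E2 := @hankel_desnanot_jacobi _ r1 n s q q_le' (rdet_neq0 _ _).
set R := rdet r1 s.+2 n in E1 E2 *; set Rp := rdet r1 s.+2 (n + 1) in E1 E2 *.
set R1 := rdet r1 s.+1 n in E2 *; set R1p := rdet r1 s.+1 (n + 1) in E1 E2 *.
set be := cdet r1 s.+1 q.+1 (n + 1) in E1 E2.
(* the identity is R1 * (I) + R * (II) *)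
apply/eqP; rewrite -subr_eq0; apply/eqP.
transitivity (R1 * (R1p * cdet r1 s.+2 q.+1 n - Rp * cdet r1 s.+1 q n - R * be)
              + R * (be * R1 - cdet r1 s.+1 q.+1 n * R1p - Rp * cdet r1 s q n)).
  by ring.
by rewrite -E1 -E2 !subrr !mulr0 addr0.
Qed.
End NormalizedMinors.

Theorem mainTheorem5 (K : fieldType) (r1 : int -> K)
  (hr : forall (a : nat) (n : int), (1 <= a)%N -> rdet r1 a n != 0) :
  (forall (a : nat) (m : int) (n : int), (2 <= a)%N -> 0 <= m -> m <= a%:Z ->
     CC r1 a m n = CC r1 a.-1 m n + yy r1 (2 * a).-1 n * CC r1 a.-1 (m - 1) n
                   + yy r1 (2 * a).-2 n * CC r1 a.-2 (m - 1) n)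
  /\ (forall (a : nat) (n : int), CC r1 a 0 n = 1).
Proof.
have nz := rdet_neq0 hr.
split => [a m n a_ge2 m_ge0 m_le | a n]; last by rewrite CCE // cdet_empty divff.
have [s a_eq] : exists s, a = s.+2 by exists a.-2; case: a a_ge2 {m_le} => [|[|a]].
subst a; rewrite yy_odd yy_even !CCE // /vv /=.
have key := key_identity hr n m_ge0 m_le.
have R1R1p : rdet r1 s.+1 n * rdet r1 s.+1 (n + 1) != 0 by rewrite mulf_neq0.
rewrite -[cdet r1 s.+2 m n](mulfK R1R1p) mulrA key.
by field; rewrite !nz.
Qed.
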